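(* In the standing setting below, assume $c$ satisfies Loeper's property. Let $x'\in\mathbb{X}$, $y_0,y_1\in\mathbb{Y}$ with $y_0\ne y_1$, $f_i(x)=-c(x,y_i)+c(x',y_i)$ for $i=0,1$, and $S=\{x\in\mathbb{X}:f_0(x)\le f_1(x)\}$. Then $S$ is $c$-convex with respect to $y_1$, i.e. the set $\{-D_yc(x,y_1):x\in S\}$ is convex.
   Context: Standing setting: $\mathbb{X},\mathbb{Y}\subset\mathbb{R}^n$ are compact with non-empty interior; $c:\mathbb{X}\times\mathbb{Y}\to\mathbb{R}$ has continuous $D_xc$, $D_yc$, and continuous mixed second derivatives with $D^2_{xy}c=(D^2_{yx}c)^T$; for each $x$ the map $y\mapsto -D_xc(x,y)$ is injective on $\mathbb{Y}$ and for each $y$ the map $x\mapsto -D_yc(x,y)$ is injective on $\mathbb{X}$; $D^2_{xy}c(x,y)$ is invertible everywhere; for every $y$ the set $[\mathbb{X}]_y=\{-D_yc(x,y):x\in\mathbb{X}\}$ is convex and for every $x$ the set $\{-D_xc(x,y):y\in\mathbb{Y}\}$ is convex. $\exp^c_y:[\mathbb{X}]_y\to\mathbb{X}$ is the inverse of $x\mapsto -D_yc(x,y)$; for $x_0,x_1\in\mathbb{X}$, $y\in\mathbb{Y}$, $p_i=-D_yc(x_i,y)$, the $c$-segment with respect to $y$ from $x_0$ to $x_1$ is $\{x_t=\exp^c_y(tp_1+(1-t)p_0):t\in[0,1]\}$. Loeper's property: for all $x_0,x_1\in\mathbb{X}$, $y_0,y\in\mathbb{Y}$ and every $x_t$ on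 the $c$-segment with respect to $y_0$ from $x_0$ to $x_1$, $-c(x_t,y)+c(x_t,y_0)\le\max\{-c(x_i,y)+c(x_i,y_0):i=0,1\}$. *)

From HB Require Import structures.
From mathcomp Require Import all_boot all_order all_algebra.
From mathcomp Require Import all_classical all_reals all_analysis.
Set Implicit Arguments. Unset Strict Implicit. Unset Printing Implicit Defensive.
Import Order.TTheory GRing.Theory Num.Theory.
Import numFieldNormedType.Exports.
Local Open Scope classical_set_scope.
Local Open Scope ring_scope.

(* Points of R^n are row vectors 'rV[R]_n; a cost is c : 'rV_n -> 'rV_n -> R
   (defined on all of R^n x R^n, only its behaviour near X x Y matters). *)

Definition ev {R : realType} {n : nat} (i : 'I_n) : 'rV[R]_n := delta_mx 0 i.

Definition Dx {R : realType} {n : nat} (c : 'rV[R]_n -> 'rV[R]_n -> R)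
  (x y : 'rV[R]_n) : 'rV[R]_n :=
  \row_i ('D_(ev i) (fun z => c z y) x).

Definition Dy {R : realType} {n : nat} (c : 'rV[R]_n -> 'rV[R]_n -> R)
  (x y : 'rV[R]_n) : 'rV[R]_n :=
  \row_i ('D_(ev i) (fun z => c x z) y).

Definition Dxy {R : realType} {n : nat} (c : 'rV[R]_n -> 'rV[R]_n -> R)
  (x y : 'rV[R]_n) : 'M[R]_n :=
  \matrix_(i, j) ('D_(ev j) (fun z => Dx c x z 0 i) y).

Definition Dyx {R : realType} {n : nat} (c : 'rV[R]_n -> 'rV[R]_n -> R)
  (x y : 'rV[R]_n) : 'M[R]_n :=
  \matrix_(i, j) ('D_(ev j) (fun z => Dy c z y 0 i) x).

Definition standing_setting {R : realType} {n : nat}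
  (X Y : set 'rV[R]_n) (c : 'rV[R]_n -> 'rV[R]_n -> R) : Prop :=
  (compact X /\ compact Y) /\
  ((X° !=set0) /\ (Y° !=set0)) /\
  (forall x y, X x -> Y y -> differentiable (fun z => c z y) x /\
                             differentiable (fun z => c x z) y) /\
  ({within X `*` Y, continuous (fun p : 'rV[R]_n * 'rV[R]_n => Dx c p.1 p.2)}) /\
  ({within X `*` Y, continuous (fun p : 'rV[R]_n * 'rV[R]_n => Dy c p.1 p.2)}) /\
  (forall x y, X x -> Y y ->
     differentiable (fun z => Dx c x z) y /\ differentiable (fun z => Dy c z y) x) /\
  ({within X `*` Y, continuous (fun p : 'rV[R]_n * 'rV[R]_n => Dxy c p.1 p.2)}) /\
  ({within X `*` Y, continuous (fun p : 'rV[R]_n * 'rV[R]_n => Dyx c p.1 p.2)}) /\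
  (forall x y, X x -> Y y -> Dxy c x y = trmx (Dyx c x y)) /\
  (forall x, X x -> {in Y &, injective (fun y => - Dx c x y)}) /\
  (forall y, Y y -> {in X &, injective (fun x => - Dy c x y)}) /\
  (forall x y, X x -> Y y -> Dxy c x y \in unitmx) /\
  (forall y, Y y -> convex_set [set - Dy c x y | x in X]) /\
  (forall x, X x -> convex_set [set - Dx c x y | y in Y]).

(* xt lies on the c-segment with respect to y from x0 to x1, i.e.
   xt = exp^c_y(t p1 + (1-t) p0) for some t in [0,1], where p_i = -D_y c(x_i,y);
   exp^c_y is the inverse of x |-> -D_y c(x,y) on X, so xt = exp^c_y(p) means
   xt \in X and -D_y c(xt,y) = p. *)
Definition on_c_segment {R : realType} {n : nat}
  (X : set 'rV[R]_n) (c : 'rV[R]_n -> 'rV[R]_n -> R) (y x0 x1 xt : 'rV[R]_n) : Prop :=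
  exists t : R, [/\ 0 <= t <= 1, X xt &
    - Dy c xt y = t *: (- Dy c x1 y) + (1 - t) *: (- Dy c x0 y)].

Definition loeper_property {R : realType} {n : nat}
  (X Y : set 'rV[R]_n) (c : 'rV[R]_n -> 'rV[R]_n -> R) : Prop :=
  forall x0 x1 y0 y xt, X x0 -> X x1 -> Y y0 -> Y y ->
    on_c_segment X c y0 x0 x1 xt ->
    - c xt y + c xt y0 <= Num.max (- c x0 y + c x0 y0) (- c x1 y + c x1 y0).

From HB Require Import structures.
From mathcomp Require Import all_boot all_order all_algebra.
From mathcomp Require Import all_classical all_reals all_analysis.
From mathcomp Require Import lra.
Import Order.TTheory GRing.Theory Num.Theory.
Import numFieldNormedType.Exports.
Local Open Scope classical_set_scope.
Local Open Scope ring_scope.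
Local Open Scope convex_scope.

(* Rewriting f0 x <= f1 x as g x <= c(x',y1) - c(x',y0) with
   g x = -c(x,y0) + c(x,y1), the set S is a sublevel set of g.  Loeper's
   property (with base point y1) says that g along a c-segment with respect
   to y1 is bounded by its values at the endpoints, so sublevel sets of g are
   closed under c-segments; and since the image of X under -D_y c(., y1) is
   convex, every point of the segment between -D_y c(a,y1) and -D_y c(b,y1)
   is -D_y c(x_t,y1) for some x_t on such a c-segment. *)

Section LoeperSublevel.
Context {R : realType} {n : nat} {X Y : set 'rV[R]_n}.
Context {c : 'rV[R]_n -> 'rV[R]_n -> R}.

Lemma standing_setting_convex_image {y} :
  standing_setting X Y c -> Y y -> convex_set [set - Dy c x y | x in X].
Proof. by move=> [_ [_ [_ [_ [_ [_ [_ [_ [_ [_ [_ [_ [cvx _]]]]]]]]]]]]]; apply: cvx. Qed.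

Lemma convex_image_c_segment {y x0 x1} (l : {i01 R}) :
  convex_set [set - Dy c x y | x in X] -> X x0 -> X x1 ->
  exists2 xt, on_c_segment X c y x1 x0 xt &
    - Dy c xt y = (- Dy c x0 y : convex_lmodType _) <| l |> - Dy c x1 y.
Proof.
move=> cvx X0 X1.
have /set_mem [xt Xt Ext] : (- Dy c x0 y : convex_lmodType _) <| l |> - Dy c x1 y
    \in [set - Dy c x y | x in X].
  by apply: cvx; rewrite inE; [exists x0 | exists x1].
by exists xt => //; exists l%:inum; split => //; apply/andP; split.
Qed.

Lemma loeper_sublevel_c_segment {y y' k x0 x1 xt} :
  loeper_property X Y c -> Y y -> Y y' -> X x0 -> X x1 ->
  on_c_segment X c y x0 x1 xt ->
  - c x0 y' + c x0 y <= k -> - c x1 y' + c x1 y <= k ->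
  - c xt y' + c xt y <= k.
Proof.
move=> loeper Yy Yy' X0 X1 seg g0 g1.
by rewrite (le_trans (loeper _ _ _ _ _ X0 X1 Yy Yy' seg)) // ge_max g0 g1.
Qed.

Lemma loeper_sublevel_c_convex {y y' k} :
  loeper_property X Y c -> Y y -> Y y' ->
  convex_set [set - Dy c x y | x in X] ->
  convex_set [set - Dy c x y | x in [set x | X x /\ - c x y' + c x y <= k]].
Proof.
move=> loeper Yy Yy' cvx _ _ l /set_mem[a [Xa ga] <-] /set_mem[b [Xb gb] <-].
have [xt seg Ext] := convex_image_c_segment l cvx Xa Xb.
rewrite inE; exists xt => //; split; first by case: seg => ? [].
exact: (loeper_sublevel_c_segment loeper Yy Yy' Xb Xa seg).
Qed.

End LoeperSublevel.

Theorem lemma2p24 (R : realType) (n : nat) (X Y : set 'rV[R]_n)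
  (c : 'rV[R]_n -> 'rV[R]_n -> R) :
  standing_setting X Y c -> loeper_property X Y c ->
  forall (x' y0 y1 : 'rV[R]_n), X x' -> Y y0 -> Y y1 -> y0 <> y1 ->
  let f0 := fun x => - c x y0 + c x' y0 in
  let f1 := fun x => - c x y1 + c x' y1 in
  let S := [set x | X x /\ f0 x <= f1 x] in
  convex_set [set - Dy c x y1 | x in S].
Proof.
move=> setting loeper x' y0 y1 _ Y0 Y1 _ f0 f1 S.
have -> : S = [set x | X x /\ - c x y0 + c x y1 <= c x' y1 - c x' y0].
  apply/seteqP; split=> x [Xx le01]; split=> //; move: le01; rewrite /f0 /f1; lra.
apply: (loeper_sublevel_c_convex loeper Y1 Y0).
exact: (standing_setting_convex_image setting Y1).
Qed.
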